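(* For $\zeta\in[a,\tau)$ define $$\widetilde{M_1}(\zeta)=\frac{1}{\epsilon}\left[(1-\tau_1)+\left(\Lambda e^{\epsilon(\omega-\tau)}-\Lambda-(1-\tau_1)\right)e^{\epsilon(\tau-\zeta)}\right],$$ and let $\Lambda_{FP}=\frac{(1-\tau_1)\left(1-e^{-\epsilon(\tau-a)}\right)}{e^{\epsilon(\omega-\tau)}-1}$. If $\Lambda\le\Lambda_{FP}$, then there exists a critical age $\hat{\zeta}\in[a,\tau)$ such that $\widetilde{M_1}(\zeta)<0$ for $a\le\zeta<\hat{\zeta}$, $\widetilde{M_1}(\hat{\zeta})=0$, and $\widetilde{M_1}(\zeta)>0$ for $\hat{\zeta}<\zeta<\tau$ (so that participants younger than $\hat\zeta$ prefer individual savings to PAYGO, older ones prefer PAYGO, and age $\hat\zeta$ is indifferent). If $\Lambda>\Lambda_{FP}$, then $\widetilde{M_1}(\zeta)>0$ for all $\zeta\in[a,\tau)$ (all these participants prefer PAYGO to individual savings, their utility increasing in $\theta$).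
   Context: Parameters: $r>0$, $\mu>r$, $\sigma>0$, real $\gamma,\xi$; $\nu=(\mu-r)/\sigma$ and $\epsilon=\gamma-r-\xi\nu\neq0$. Ages $a<\tau<\omega$; salary tax rate $\tau_1\in[0,1)$. With survival function $s(x)=e^{-A_m(x-a)-\frac{B_m}{\ln c}(c^x-c^a)}$ (Makeham constants $A_m,B_m,c$) and population growth rate $\rho$, $\Lambda=\frac{\int_a^\tau e^{-(\rho+A_m)(u-a)-\frac{B_m}{\ln c}(c^u-c^a)}du}{\int_\tau^\omega e^{-(\rho+A_m)(u-a)-\frac{B_m}{\ln c}(c^u-c^a)}du}>0$ (inverse dependency ratio). Interpretation: $\zeta$ is a participant's age at the decision time; the participant's value function is $\frac1\delta L[x+(\widetilde{M_1}\theta+\widetilde{M_2}k+M_3)w+Ny]^\delta$ with $L>0$, so the sign of $\widetilde{M_1}(\zeta)$ is the sign of the effect of raising the PAYGO contribution rate $\theta$ (relative to individual savings). *)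

From Stdlib Require Import Reals.
From Coquelicot Require Import Coquelicot.
Open Scope R_scope.

Definition makeham_weight (A_m B_m c rho a u : R) : R :=
  exp (- (rho + A_m) * (u - a) - B_m / ln c * (Rpower c u - Rpower c a)).

Definition Lambda (A_m B_m c rho a tau omega : R) : R :=
  RInt (makeham_weight A_m B_m c rho a) a tau /
  RInt (makeham_weight A_m B_m c rho a) tau omega.

Definition nu (r mu sigma : R) : R := (mu - r) / sigma.
Definition eps (r mu sigma gamma xi : R) : R := gamma - r - xi * nu r mu sigma.

Definition M1t (e Lam tau1 tau omega zeta : R) : R :=
  / e * ((1 - tau1) + (Lam * exp (e * (omega - tau)) - Lam - (1 - tau1))
                        * exp (e * (tau - zeta))).

Definition Lambda_FP (e tau1 a tau omega : R) : R :=
  (1 - tau1) * (1 - exp (- e * (tau - a))) / (exp (e * (omega - tau)) - 1).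

(* With K = 1 - tau1 and D = Lam (X - 1) - K, where X = exp (e (omega - tau)),
   M z = (K + D exp (e (tau - z))) / e is strictly increasing when D < 0 and
   nonincreasing otherwise.  Since (exp (e x) - 1) / e > 0 for x > 0, we get
   M tau = Lam (X - 1) / e > 0, and the value at the entry age factors as
   M a = exp (e (tau - a)) (X - 1) / e (Lam - Lambda_FP), so its sign is that of
   Lam - Lambda_FP.  If M a <= 0 then M must increase, and its single root is the
   critical age; if M a > 0 then M is positive at both ends of [a, tau], hence
   in between by monotonicity. *)

From Stdlib Require Import Reals Lra Psatz.
From Coquelicot Require Import Coquelicot.
Open Scope R_scope.

Lemma exp_scaled_sub_div_pos (e x y : R) :
  e <> 0 -> y < x -> 0 < (exp (e * x) - exp (e * y)) / e.
Proof.
intros He Hyx.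
destruct (Rdichotomy _ _ He) as [Hn | Hp].
- assert (exp (e * x) < exp (e * y)) by (apply exp_increasing; nra).
  assert (/ e < 0) by (apply Rinv_lt_0_compat; lra).
  unfold Rdiv; nra.
- assert (exp (e * y) < exp (e * x)) by (apply exp_increasing; nra).
  apply Rdiv_lt_0_compat; lra.
Qed.

Lemma exp_sub_one_div_pos (e x : R) : e <> 0 -> 0 < x -> 0 < (exp (e * x) - 1) / e.
Proof.
intros He Hx.
replace 1 with (exp (e * 0)) by (now rewrite Rmult_0_r, exp_0).
now apply exp_scaled_sub_div_pos.
Qed.

Section ExpProfile.

Variables e K D t : R.
Hypothesis He : e <> 0.

Let f (z : R) : R := / e * (K + D * exp (e * (t - z))).

Lemma profile_sub (z w : R) :
  f w - f z = - D * ((exp (e * (t - z)) - exp (e * (t - w))) / e).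
Proof. unfold f; field; exact He. Qed.

Lemma profile_increasing (z w : R) : D < 0 -> z < w -> f z < f w.
Proof.
intros HD Hzw.
assert (0 < (exp (e * (t - z)) - exp (e * (t - w))) / e)
  by (apply exp_scaled_sub_div_pos; lra).
pose proof (profile_sub z w); nra.
Qed.

Lemma profile_nonincreasing (z w : R) : 0 <= D -> z <= w -> f w <= f z.
Proof.
intros HD [Hzw | <-]; [| lra].
assert (0 < (exp (e * (t - z)) - exp (e * (t - w))) / e)
  by (apply exp_scaled_sub_div_pos; lra).
pose proof (profile_sub z w); nra.
Qed.

Lemma profile_root : 0 < K -> D < 0 -> f (t - ln (- K / D) / e) = 0.
Proof.
intros HK HD.
assert (Hq : 0 < - K / D)
  by (unfold Rdiv; assert (/ D < 0) by (apply Rinv_lt_0_compat; lra); nra).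
unfold f.
replace (e * (t - (t - ln (- K / D) / e))) with (ln (- K / D)) by (field; exact He).
rewrite exp_ln by exact Hq.
field; lra.
Qed.

Lemma profile_pos_between (a z : R) :
  0 < f a -> 0 < f t -> a <= z <= t -> 0 < f z.
Proof.
intros Ha Ht Hz.
destruct (Rlt_or_le D 0) as [HD | HD].
- destruct (Req_dec a z) as [<- | Haz]; [exact Ha |].
  pose proof (profile_increasing a z HD ltac:(lra)); lra.
- pose proof (profile_nonincreasing z t HD ltac:(lra)); lra.
Qed.

Lemma profile_sign_change (a : R) :
  0 < K -> a < t -> f a <= 0 -> 0 < f t ->
  exists zh, a <= zh < t /\
    (forall z, a <= z < zh -> f z < 0) /\
    f zh = 0 /\
    (forall z, zh < z < t -> 0 < f z).
Proof.
intros HK Hat Ha Ht.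
assert (HD : D < 0).
{ destruct (Rlt_or_le D 0) as [HD | HD]; [exact HD |].
  pose proof (profile_nonincreasing a t HD ltac:(lra)); lra. }
pose proof (profile_root HK HD) as Hroot.
set (zh := t - ln (- K / D) / e) in Hroot.
exists zh; split; [split | split; [| split]].
- destruct (Rle_or_lt a zh) as [H | H]; [exact H |].
  pose proof (profile_increasing zh a HD H); lra.
- destruct (Rlt_or_le zh t) as [H | [H | H]]; [exact H | |].
  + pose proof (profile_increasing t zh HD H); lra.
  + rewrite <- H in Hroot; lra.
- intros z Hz; pose proof (profile_increasing z zh HD ltac:(lra)); lra.
- exact Hroot.
- intros z Hz; pose proof (profile_increasing zh z HD ltac:(lra)); lra.
Qed.

End ExpProfile.

Lemma RInt_makeham_weight_pos (A_m B_m c rho a x y : R) :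
  x < y -> 0 < RInt (makeham_weight A_m B_m c rho a) x y.
Proof.
intros Hxy; apply RInt_gt_0; [exact Hxy | |].
- intros; apply exp_pos.
- intros z _.
  apply (ex_derive_continuous (K := R_AbsRing) (V := R_NormedModule)).
  unfold makeham_weight, Rpower; auto_derive; auto.
Qed.

Lemma Lambda_pos (A_m B_m c rho a tau omega : R) :
  a < tau -> tau < omega -> 0 < Lambda A_m B_m c rho a tau omega.
Proof.
intros Hat Hto.
apply Rdiv_lt_0_compat; now apply RInt_makeham_weight_pos.
Qed.

Lemma M1t_at_tau (e Lam tau1 tau omega : R) :
  e <> 0 ->
  M1t e Lam tau1 tau omega tau = Lam * ((exp (e * (omega - tau)) - 1) / e).
Proof.
intros He; unfold M1t.
rewrite Rminus_diag, Rmult_0_r, exp_0.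
field; exact He.
Qed.

Lemma M1t_at_entry_age (e Lam tau1 a tau omega : R) :
  e <> 0 -> exp (e * (omega - tau)) <> 1 ->
  M1t e Lam tau1 tau omega a =
  exp (e * (tau - a)) * ((exp (e * (omega - tau)) - 1) / e)
    * (Lam - Lambda_FP e tau1 a tau omega).
Proof.
intros He HX; unfold M1t, Lambda_FP.
replace (- e * (tau - a)) with (- (e * (tau - a))) by ring.
rewrite exp_Ropp.
pose proof (exp_pos (e * (tau - a))).
field; repeat split; lra.
Qed.

Theorem theorem3p1
  (r mu sigma gamma xi tau1 a tau omega A_m B_m c rho : R)
  (hr : 0 < r) (hmu : r < mu) (hsigma : 0 < sigma)
  (heps : eps r mu sigma gamma xi <> 0)
  (htau1 : 0 <= tau1 < 1)
  (hat : a < tau) (hto : tau < omega)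
  (hc : 0 < c) (hc1 : c <> 1) :
  let e := eps r mu sigma gamma xi in
  let Lam := Lambda A_m B_m c rho a tau omega in
  let M := M1t e Lam tau1 tau omega in
  (Lam <= Lambda_FP e tau1 a tau omega ->
     exists zh, a <= zh < tau /\
       (forall z, a <= z < zh -> M z < 0) /\
       M zh = 0 /\
       (forall z, zh < z < tau -> 0 < M z)) /\
  (Lambda_FP e tau1 a tau omega < Lam ->
     forall z, a <= z < tau -> 0 < M z).
Proof.
intros e Lam M.
assert (HLam : 0 < Lam) by now apply Lambda_pos.
assert (HX : 0 < (exp (e * (omega - tau)) - 1) / e)
  by (apply exp_sub_one_div_pos; [exact heps | lra]).
assert (HXne : exp (e * (omega - tau)) <> 1)
  by (intros HX1; rewrite HX1, Rminus_diag in HX; unfold Rdiv in HX; lra).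
assert (Htau : 0 < M tau)
  by (unfold M; rewrite M1t_at_tau by exact heps; nra).
pose proof (M1t_at_entry_age e Lam tau1 a tau omega heps HXne) as Ha.
fold M in Ha.
pose proof (exp_pos (e * (tau - a))) as Hu.
split.
- intros Hle.
  apply (profile_sign_change e _ _ tau heps a); [lra | exact hat | | exact Htau].
  change (M a <= 0); rewrite Ha.
  apply Rmult_le_0_l; [apply Rmult_le_pos |]; lra.
- intros Hlt z Hz.
  apply (profile_pos_between e _ _ tau heps a); [| exact Htau | lra].
  change (0 < M a); rewrite Ha.
  apply Rmult_lt_0_compat; [apply Rmult_lt_0_compat |]; lra.
Qed.
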